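(* Let $\mathcal{X}$ be an input space, let predictors be functions $\theta:\mathcal{X}\to\mathbb{R}^K$, and let each input $x\in\mathcal{X}$ have label $y=y(x)$ given by a fixed labeling function common to all distributions considered. Let $L(\cdot,\cdot)$ be a loss function such that $L(v,y)$ is convex in its first argument $v\in\mathbb{R}^K$. For a probability density $Q$ on $\mathcal{X}$ and a predictor $\theta$, define the expected loss $\mathcal{L}(Q,\theta)=\int_x L(\theta(x),y)\,Q(x)\,dx$ (assumed finite for all predictors considered). Let $Q_S^1,\dots,Q_S^n$ be source densities on $\mathcal{X}$, and for each $1\le k\le n$ let $\theta_S^k=\arg\min_{\theta}\mathcal{L}(Q_S^k,\theta)$ be an optimal source predictor. Assume there exists $\lambda\in\mathbb{R}^n$ with $\lambda\ge 0$ and $\lambda^\top\mathbb{1}=1$ such that the target density satisfies $Q_T=\sum_{i=1}^n\lambda_iQ_S^i$. Define the target predictor (at points where $Q_T(x)>0$) $$\theta_T(x)=\sum_{k=1}^n\frac{\lambda_kQ_S^k(x)}{\sum_{j=1}^n\lambda_jQ_S^j(x)}\,\theta_S^k(x).$$ Then $$\mathcal{L}(Q_T,\theta_T)\le\min_{1\le j\le n}\mathcal{L}(Q_T,\theta_S^j).$$ Moreover, letting $\alpha=\arg\min_{1\le j\le n}\mathcal{L}(Q_T,\theta_S^j)$, this inequality is strict if all entries of $\lambda$ are strictly positive and there exists a source $i$ for which $\mathcal{L}(Q_S^i,\theta_S^i)<\mathcal{L}(Q_S^i,\theta_S^{\alpha})$.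
   Context: This is a model for multi-source domain adaptation: each of $n$ source domains has an input distribution with density $Q_S^k$ on $\mathcal{X}$, the target domain has density $Q_T$, and the supervised expected loss of a predictor $\theta$ under a density $Q$ is $\mathcal{L}(Q,\theta)=\int_x L(\theta(x),y)Q(x)\,dx$, where $y$ denotes the ground-truth label of $x$. *)

From HB Require Import structures.
From mathcomp Require Import all_boot all_order all_algebra.
From mathcomp Require Import all_classical all_reals all_analysis.
Set Implicit Arguments. Unset Strict Implicit. Unset Printing Implicit Defensive.
Import Order.TTheory GRing.Theory Num.Theory.
Local Open Scope classical_set_scope.
Local Open Scope ring_scope.

Definition exp_loss (d : measure_display) (T : measurableType d) (R : realType)
  (mu : {measure set T -> \bar R}) (K : nat) (Y : Type)
  (L : 'rV[R]_K -> Y -> R) (y : T -> Y) (Q : T -> R) (theta : T -> 'rV[R]_K) : R :=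
  Rintegral mu setT (fun x => L (theta x) (y x) * Q x).

Definition loss_finite (d : measure_display) (T : measurableType d) (R : realType)
  (mu : {measure set T -> \bar R}) (K : nat) (Y : Type)
  (L : 'rV[R]_K -> Y -> R) (y : T -> Y) (Q : T -> R) (theta : T -> 'rV[R]_K) : Prop :=
  mu.-integrable setT (fun x => (L (theta x) (y x) * Q x)%:E).

Definition is_density (d : measure_display) (T : measurableType d) (R : realType)
  (mu : {measure set T -> \bar R}) (Q : T -> R) : Prop :=
  measurable_fun setT Q /\ (forall x, 0 <= Q x) /\ ((\int[mu]_x (Q x)%:E)%E = 1%E).

(* Target predictor; at points with sum_j lambda_j Q_j(x) = 0 the division
   by 0 yields 0 (MathComp convention x / 0 = 0), i.e. thetaT x = 0 there. *)
Definition thetaT (T : Type) (R : realType) (K n : nat) (lam : 'I_n -> R)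
  (QS : 'I_n -> T -> R) (thetaS : 'I_n -> T -> 'rV[R]_K) (x : T) : 'rV[R]_K :=
  \sum_(k < n) ((lam k * QS k x) / (\sum_(j < n) lam j * QS j x)) *: thetaS k x.

From mathcomp Require Import all_boot all_order all_algebra.
From mathcomp Require Import all_classical all_reals all_analysis.
Import Order.TTheory GRing.Theory Num.Theory.
Local Open Scope classical_set_scope.
Local Open Scope ring_scope.

(* Proof idea: at every point x, theta_T(x) is the convex combination of the
   theta_S^k(x) with weights proportional to lambda_k Q_S^k(x), so Jensen's
   inequality bounds the loss integrand of (Q_T, theta_T) by
   sum_k lambda_k L(theta_S^k(x), y) Q_S^k(x).  Integrating,
   L(Q_T, theta_T) <= sum_k lambda_k L(Q_S^k, theta_S^k), while by linearity
   L(Q_T, theta_S^j) = sum_k lambda_k L(Q_S^k, theta_S^j).  Optimality of each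
   theta_S^k compares these sums termwise, and a single strict term with
   lambda_i > 0 makes the comparison strict. *)

Section Jensen.
Context {R : numFieldType} {E : lmodType R} {f : E -> R}.
Hypothesis convex_f : convex_function setT (f : convex_lmodType E -> R^o).

Lemma convex_function_le t a b : 0 <= t -> t <= 1 ->
  f (t *: a + (1 - t) *: b) <= t * f a + (1 - t) * f b.
Proof. by move=> t0 t1; have := convex_f (Itv01 t0 t1) a b (mem_set I) (mem_set I). Qed.

Lemma convex_jensen n (w : 'I_n -> R) (v : 'I_n -> E) :
  (forall k, 0 <= w k) -> \sum_(k < n) w k = 1 ->
  f (\sum_(k < n) w k *: v k) <= \sum_(k < n) w k * f (v k).
Proof.
elim: n w v => [|n IHn] w v w_ge0.
  by rewrite big_ord0 => /eqP; rewrite eq_sym oner_eq0.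
rewrite !big_ord_recl.
set s := \sum_(i < n) w (lift ord0 i) => w_sum.
have s_ge0 : 0 <= s by apply: sumr_ge0.
have sE : s = 1 - w ord0 by rewrite -w_sum addrAC subrr add0r.
have [s0|s_neq0] := eqVneq s 0.
  have w_lift0 i : w (lift ord0 i) = 0 by exact: (psumr_eq0P (fun j _ => w_ge0 _) s0).
  rewrite !big1 => [|i _|i _]; rewrite ?w_lift0 ?scale0r ?mul0r //.
  by move: w_sum; rewrite s0 !addr0 => ->; rewrite scale1r mul1r.
set u := \sum_(i < n) (w (lift ord0 i) / s) *: v (lift ord0 i).
have -> : \sum_(i < n) w (lift ord0 i) *: v (lift ord0 i) = (1 - w ord0) *: u.
  rewrite -sE /u scaler_sumr; apply: eq_bigr => i _.
  by rewrite scalerA mulrCA divff ?mulr1.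
have w0_le1 : w ord0 <= 1 by rewrite -w_sum lerDl.
apply: le_trans (convex_function_le (w ord0) (v ord0) u (w_ge0 _) w0_le1) _.
rewrite lerD2l -sE.
have -> : \sum_(i < n) w (lift ord0 i) * f (v (lift ord0 i))
    = s * \sum_(i < n) (w (lift ord0 i) / s) * f (v (lift ord0 i)).
  by rewrite mulr_sumr; apply: eq_bigr => i _; rewrite mulrA mulrCA divff ?mulr1.
rewrite ler_wpM2l // IHn // => [i|]; first by rewrite divr_ge0.
by rewrite -mulr_suml mulfV.
Qed.

(* If all the weights vanish, the junk quotients c k / 0 = 0 are harmless:
   both sides are 0. *)
Lemma convex_mixture_le n (c : 'I_n -> R) (v : 'I_n -> E) : (forall k, 0 <= c k) ->
  f (\sum_(k < n) (c k / \sum_(j < n) c j) *: v k) * \sum_(j < n) c j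
  <= \sum_(k < n) c k * f (v k).
Proof.
move=> c_ge0; set q := \sum_(j < n) c j.
have [q0|q_neq0] := eqVneq q 0.
  rewrite q0 mulr0 big1 // => k _.
  by rewrite (psumr_eq0P (fun j _ => c_ge0 j) q0) ?mul0r.
have q_ge0 : 0 <= q by apply: sumr_ge0.
rewrite mulrC -ler_pdivlMl ?lt_def ?q_neq0 // mulr_sumr.
under [leRHS]eq_bigr do rewrite mulrA [q^-1 * _]mulrC.
apply: convex_jensen => [k|]; first by rewrite divr_ge0.
by rewrite -mulr_suml mulfV.
Qed.

End Jensen.

Lemma ltr_le_sum (R : numDomainType) (I : finType) (F G : I -> R) (i0 : I) :
  (forall i, F i <= G i) -> F i0 < G i0 -> \sum_i F i < \sum_i G i.
Proof.
move=> le_FG lt_FG0; rewrite (bigD1 i0) //= [ltRHS](bigD1 i0) //=.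
by rewrite ltr_leD // ler_sum.
Qed.

Section Lincomb.
Context d (T : measurableType d) (R : realType) (mu : {measure set T -> \bar R}).
Variables (D : set T) (I : Type) (c : I -> R) (f : I -> T -> R).
Hypotheses (mD : measurable D) (f_int : forall i, mu.-integrable D (EFin \o f i)).

Let scaled_integrable i : mu.-integrable D (fun x => (c i * f i x)%:E).
Proof.
by under eq_fun do rewrite EFinM; exact: (integrableZl (mu:=mu) mD (c i) (f_int i)).
Qed.

Lemma integrable_lincomb (s : seq I) :
  mu.-integrable D (fun x => (\sum_(i <- s) c i * f i x)%:E).
Proof.
under eq_fun do rewrite -sumEFin.
exact: (integrable_sum (mu:=mu) mD s (fun i _ => scaled_integrable i)).
Qed.

Lemma Rintegral_lincomb (s : seq I) :
  Rintegral mu D (fun x => \sum_(i <- s) c i * f i x)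
  = \sum_(i <- s) c i * Rintegral mu D (f i).
Proof.
elim: s => [|i s IHs].
  rewrite big_nil; under eq_Rintegral do rewrite big_nil.
  by rewrite /Rintegral integral0.
under eq_Rintegral do rewrite big_cons.
rewrite big_cons RintegralD ?RintegralZl ?IHs //.
  exact: scaled_integrable.
exact: integrable_lincomb.
Qed.

End Lincomb.

Definition mixture {T : Type} {R : pzSemiRingType} {n : nat} (lam : 'I_n -> R)
    (Q : 'I_n -> T -> R) : T -> R :=
  fun x => \sum_(k < n) lam k * Q k x.

Section ExpectedLoss.
Context {d} {T : measurableType d} {R : realType} {mu : {measure set T -> \bar R}}.
Context {K : nat} {Y : Type} {L : 'rV[R]_K -> Y -> R} {y : T -> Y}.
Context {n : nat} {lam : 'I_n -> R} {Q : 'I_n -> T -> R}.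

Lemma exp_loss_mixture (theta : T -> 'rV[R]_K) :
  (forall k, loss_finite mu L y (Q k) theta) ->
  exp_loss mu L y (mixture lam Q) theta
  = \sum_(k < n) lam k * exp_loss mu L y (Q k) theta.
Proof.
move=> fin; rewrite /exp_loss -Rintegral_lincomb //.
apply: eq_Rintegral => x _; rewrite /mixture mulr_sumr.
by apply: eq_bigr => k _; rewrite mulrCA.
Qed.

Lemma exp_loss_thetaT_le (thetaS : 'I_n -> T -> 'rV[R]_K) :
  (forall yy : Y, convex_function setT (fun v : convex_lmodType 'rV[R]_K => L v yy)) ->
  (forall k, 0 <= lam k) -> (forall k x, 0 <= Q k x) ->
  loss_finite mu L y (mixture lam Q) (thetaT lam Q thetaS) ->
  (forall k, loss_finite mu L y (Q k) (thetaS k)) ->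
  exp_loss mu L y (mixture lam Q) (thetaT lam Q thetaS)
  <= \sum_(k < n) lam k * exp_loss mu L y (Q k) (thetaS k).
Proof.
move=> convex_L lam_ge0 Q_ge0 fin_thetaT fin_thetaS.
rewrite /exp_loss -Rintegral_lincomb //.
apply: le_Rintegral => //; first exact: integrable_lincomb.
move=> x _; under [leRHS]eq_bigr do rewrite mulrA mulrAC.
exact: (convex_mixture_le (convex_L (y x)) _ (fun k => lam k * Q k x)
  (fun k => thetaS k x) (fun k => mulr_ge0 (lam_ge0 k) (Q_ge0 k x))).
Qed.

End ExpectedLoss.

Theorem lemma1 (d : measure_display) (T : measurableType d) (R : realType)
  (mu : {measure set T -> \bar R}) (K : nat) (Y : Type)
  (L : 'rV[R]_K -> Y -> R) (y : T -> Y) (n : nat)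
  (QS : 'I_n -> T -> R) (QT : T -> R) (lam : 'I_n -> R)
  (thetaS : 'I_n -> T -> 'rV[R]_K) :
  (* convexity of the loss in its first argument *)
  (forall yy : Y, convex_function setT (fun v : convex_lmodType 'rV[R]_K => L v yy)) ->
  (* source densities *)
  (forall k, is_density mu (QS k)) ->
  (* lambda in the simplex, and Q_T = sum_i lambda_i Q_S^i *)
  (forall i, 0 <= lam i) -> \sum_(i < n) lam i = 1 ->
  (forall x, QT x = \sum_(i < n) lam i * QS i x) ->
  (* finiteness of all the expected losses considered *)
  (forall j k, loss_finite mu L y (QS k) (thetaS j)) ->
  (forall j, loss_finite mu L y QT (thetaS j)) ->
  loss_finite mu L y QT (thetaT lam QS thetaS) ->
  (* theta_S^k minimizes the expected loss under Q_S^k *)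
  (forall k (theta : T -> 'rV[R]_K), loss_finite mu L y (QS k) theta ->
     exp_loss mu L y (QS k) (thetaS k) <= exp_loss mu L y (QS k) theta) ->
  (forall j, exp_loss mu L y QT (thetaT lam QS thetaS)
             <= exp_loss mu L y QT (thetaS j)) /\
  (forall alpha : 'I_n,
     (forall j, exp_loss mu L y QT (thetaS alpha) <= exp_loss mu L y QT (thetaS j)) ->
     (forall i, 0 < lam i) ->
     (exists i, exp_loss mu L y (QS i) (thetaS i) < exp_loss mu L y (QS i) (thetaS alpha)) ->
     exp_loss mu L y QT (thetaT lam QS thetaS) < exp_loss mu L y QT (thetaS alpha)).
Proof.
(* Unused: the normalisation of lam, the total mass of the densities, the
   integrability for QT (implied by that for the QS k) and the minimality of
   alpha. *)
move=> convex_L dens lam_ge0 _ QTE fin_S _ fin_thetaT opt.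
have QS_ge0 k x : 0 <= QS k x by case: (dens k) => _ [].
have QT_mixture : QT = mixture lam QS := funext QTE.
rewrite QT_mixture in fin_thetaT *.
have thetaT_le :=
  exp_loss_thetaT_le _ convex_L lam_ge0 QS_ge0 fin_thetaT (fun k => fin_S k k).
have opt_S j k : exp_loss mu L y (QS k) (thetaS k) <= exp_loss mu L y (QS k) (thetaS j).
  exact: opt (fin_S j k).
split=> [j | alpha _ lam_gt0 [i lt_i]].
  apply: le_trans thetaT_le _; rewrite exp_loss_mixture //.
  by apply: ler_sum => k _; exact: ler_wpM2l (lam_ge0 k) _ _ (opt_S j k).
apply: le_lt_trans thetaT_le _; rewrite exp_loss_mixture //.
apply: (@ltr_le_sum _ _ _ _ i) => [k|]; last by rewrite ltr_pM2l.
by rewrite ler_pM2l ?opt_S.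
Qed.
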